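(* Let $\pi$ be a convergent cyclic pattern. Then $r_\pi=\rho(\pi)$ if and only if the code of $\pi$ is non-decreasing.
   Context: A cyclic pattern is the equivalence class of a cyclic permutation realized by a cycle $P$ on the line; the $P$-linear map $f$ agrees with the cycle on $P$ and is affine between consecutive points of $P$. $\pi$ is convergent if a representative has no points $x<y$ with $f(x)<x$, $f(y)>y$; then $f$ has a unique fixed point $a$. Over-rotation pair: $2p$ is the number of $x\in P$ with $f(x)-x$ and $f^2(x)-f(x)$ of different signs, $q$ the period, $\rho(\pi)=p/q$. $r_\pi$ is the left endpoint of the over-rotation interval $[r_\pi,\frac12]$ of $f$, which is the closure of the set of over-rotation numbers of non-fixed periodic orbits of $f$. Write $x>_a y$ if $x<y<a$ or $x>y>a$. Code: with $\rho=\rho(\pi)$ and $\varphi(y)=1$ if $y>a$ and $f(y)<a$, $0$ otherwise, $L(x_0)=0$ for the leftmost point $x_0$ of $P$ and $L(f(y))=L(y)+\rho-\varphi(y)$. The code is non-decreasing if $x>_a y$ implies $L(x)\le L(y)$ for all $x,y\in P$. *)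

From Stdlib Require Import Reals Lra Lia ZArith Arith.
Open Scope R_scope.

(* A cyclic pattern of period n is represented by its canonical
   representative: the cycle P = {0, 1, ..., n-1} (as reals) on which the
   cyclic permutation s acts.  All notions below are invariant under
   order-preserving relabelling, so this is no loss of generality. *)
Definition is_cyclic_perm (s : nat -> nat) (n : nat) : Prop :=
  (forall i, (i < n)%nat -> (s i < n)%nat) /\
  (forall i j, (i < n)%nat -> (j < n)%nat -> s i = s j -> i = j) /\
  (forall i, (i < n)%nat -> exists k, Nat.iter k s 0%nat = i).

(* The P-linear map: agrees with s on P and is affine on each [i, i+1].
   (Outside [0, n-1] it extends the extreme affine pieces; only its
   restriction to [0, n-1] is ever used.) *)
Definition plin (s : nat -> nat) (n : nat) (x : R) : R :=
  let i := Nat.min (Z.to_nat (Int_part x)) (n - 2) in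
  INR (s i) + (x - INR i) * (INR (s (S i)) - INR (s i)).

Fixpoint sumR (g : nat -> R) (k : nat) : R :=
  match k with
  | O => 0
  | S k' => sumR g k' + g k'
  end.

Definition indic (b : Prop) (d : {b} + {~ b}) : R := if d then 1 else 0.

(* Over-rotation number of the periodic orbit of x (of period m) under f:
   (number of orbit points y with f(y)-y, f(f(y))-f(y) of different signs)/(2m). *)
Definition ornum (f : R -> R) (x : R) (m : nat) : R :=
  sumR (fun k => let y := Nat.iter k f x in
          indic _ (Rlt_dec ((f y - y) * (f (f y) - f y)) 0)) m
  / (2 * INR m).

(* rho(pi) = p/q for the pattern itself, computed on P. *)
Definition rho_pat (s : nat -> nat) (n : nat) : R :=
  sumR (fun i => indic _ (Rlt_dec ((INR (s i) - INR i) *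
                                   (INR (s (s i)) - INR (s i))) 0)) n
  / (2 * INR n).

Definition convergent (s : nat -> nat) (n : nat) : Prop :=
  forall i j, (i < j)%nat -> (j < n)%nat -> ~ ((s i < i)%nat /\ (j < s j)%nat).

Definition ornum_set (s : nat -> nat) (n : nat) (r : R) : Prop :=
  exists (x : R) (m : nat),
    0 <= x <= INR (n - 1) /\ (2 <= m)%nat /\
    Nat.iter m (plin s n) x = x /\
    (forall k, (0 < k < m)%nat -> Nat.iter k (plin s n) x <> x) /\
    r = ornum (plin s n) x m.

Definition is_glb (E : R -> Prop) (r : R) : Prop :=
  (forall y, E y -> r <= y) /\ (forall b, (forall y, E y -> b <= y) -> b <= r).

(* r_pi = rho(pi), where r_pi is the left endpoint of the closure of the set
   of over-rotation numbers, i.e. its infimum. *)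
Definition r_pi_eq (s : nat -> nat) (n : nat) (v : R) : Prop :=
  is_glb (ornum_set s n) v.

Definition phi (s : nat -> nat) (a : R) (y : nat) : R :=
  indic _ (Rlt_dec a (INR y)) * indic _ (Rlt_dec (INR (s y)) a).

(* L at the point s^k(0): L(x0)=0, L(f y) = L y + rho - phi y. *)
Definition code (s : nat -> nat) (n : nat) (a : R) (k : nat) : R :=
  INR k * rho_pat s n - sumR (fun j => phi s a (Nat.iter j s 0%nat)) k.

Definition gt_a (a x y : R) : Prop := (x < y /\ y < a) \/ (x > y /\ y > a).

(* Non-decreasing code: x >_a y implies L(x) <= L(y), for x, y in P
   (every point of P is s^k(0) for a unique k < n). *)
Definition code_nondecreasing (s : nat -> nat) (n : nat) (a : R) : Prop :=
  forall k1 k2, (k1 < n)%nat -> (k2 < n)%nat ->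
    gt_a a (INR (Nat.iter k1 s 0%nat)) (INR (Nat.iter k2 s 0%nat)) ->
    code s n a k1 <= code s n a k2.

From Stdlib Require Import Reals.
From Stdlib Require Import Lra Lia ZArith List Permutation ClassicalEpsilon Classical.
Open Scope R_scope.

(* Over-rotation numbers are crossing counts: as f x - x has the sign of
   a - x, the over-rotation number of a periodic orbit avoiding a is the
   proportion of its points jumping from the right of a to the left of a
   ([ornum_crossings]); for P itself this proportion is rho <= 1/2.
   Backward direction: a non-decreasing code extends to a function Lext on
   [0, n-1] with Lext (f x) >= Lext x + rho - cross x, and telescoping around
   a periodic orbit shows that its crossing proportion is >= rho, which P
   attains.  Forward direction: a violation X >_a Y, L(X) > L(Y), gives an
   orbit segment of P with fewer than u rho crossings in u steps; pulling
   [X, a] back along it (covering lemma for Lipschitz maps) yields either an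
   orbit alternating around a, crossing u/2 >= u rho times, or a periodic
   orbit shadowing the segment with over-rotation number below rho. *)

Lemma sumR_ext (g h : nat -> R) m :
  (forall k, (k < m)%nat -> g k = h k) -> sumR g m = sumR h m.
Proof.
  induction m as [|m IH]; intros Hgh; simpl; [reflexivity|].
  rewrite IH, Hgh by (try intros; try apply Hgh; lia). reflexivity.
Qed.

Lemma sumR_le (g h : nat -> R) m :
  (forall k, (k < m)%nat -> g k <= h k) -> sumR g m <= sumR h m.
Proof.
  induction m as [|m IH]; intros Hgh; simpl; [lra|].
  assert (sumR g m <= sumR h m) by (apply IH; intros; apply Hgh; lia).
  assert (g m <= h m) by (apply Hgh; lia). lra.
Qed.

Lemma sumR_plus (g h : nat -> R) m :
  sumR (fun k => g k + h k) m = sumR g m + sumR h m.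
Proof. induction m; simpl; lra. Qed.

Lemma sumR_minus (g h : nat -> R) m :
  sumR (fun k => g k - h k) m = sumR g m - sumR h m.
Proof. induction m; simpl; lra. Qed.

Lemma sumR_scal (c : R) (g : nat -> R) m :
  sumR (fun k => c * g k) m = c * sumR g m.
Proof. induction m; simpl; lra. Qed.

Lemma sumR_const (c : R) m : sumR (fun _ => c) m = INR m * c.
Proof. induction m; simpl sumR; [simpl; lra|]. rewrite S_INR. lra. Qed.

Lemma sumR_tele (h : nat -> R) m :
  sumR (fun k => h (S k) - h k) m = h m - h O.
Proof. induction m; simpl; lra. Qed.

Lemma sumR_shift (g : nat -> R) m :
  sumR (fun k => g (S k)) m = sumR g m - g O + g m.
Proof. induction m; simpl; lra. Qed.

Lemma sumR_split (g : nat -> R) m p :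
  sumR g (m + p) = sumR g m + sumR (fun k => g (m + k)%nat) p.
Proof.
  induction p as [|p IH]; simpl; [rewrite Nat.add_0_r; lra|].
  rewrite Nat.add_succ_r. simpl. rewrite IH. lra.
Qed.

Lemma sumR_periodic (h : nat -> R) d q :
  (forall j, h (d + j)%nat = h j) -> sumR h (q * d) = INR q * sumR h d.
Proof.
  intros Hper. induction q as [|q IH]; [simpl; lra|].
  replace (S q * d)%nat with (d + q * d)%nat by lia.
  rewrite sumR_split, (sumR_ext (fun k => h (d + k)%nat) h) by auto.
  rewrite IH, S_INR. ring.
Qed.

Fixpoint lsum (l : list R) : R := match l with nil => 0 | x :: l' => x + lsum l' end.

Lemma lsum_perm l l' : Permutation l l' -> lsum l = lsum l'.
Proof. induction 1; simpl; lra. Qed.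

Lemma lsum_app l l' : lsum (l ++ l') = lsum l + lsum l'.
Proof. induction l; simpl; lra. Qed.

Lemma sumR_lsum (g : nat -> R) m : sumR g m = lsum (map g (seq 0 m)).
Proof.
  induction m as [|m IH]; [reflexivity|].
  rewrite seq_S, map_app, lsum_app, Nat.add_0_l. simpl. rewrite IH. lra.
Qed.

Lemma sumR_reindex (g : nat -> R) (sg : nat -> nat) m :
  (forall k, (k < m)%nat -> (sg k < m)%nat) ->
  (forall i j, (i < m)%nat -> (j < m)%nat -> sg i = sg j -> i = j) ->
  sumR (fun k => g (sg k)) m = sumR g m.
Proof.
  intros Hrange Hinj. rewrite !sumR_lsum, <- (map_map sg g).
  apply lsum_perm, Permutation_map, Permutation_map_same_l.
  - apply NoDup_map_NoDup_ForallPairs; [|apply seq_NoDup].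
    intros x y Hx Hy. apply in_seq in Hx, Hy. apply Hinj; lia.
  - intros y Hy. apply in_map_iff in Hy. destruct Hy as [x [<- Hx]].
    apply in_seq in Hx. apply in_seq. specialize (Hrange x). lia.
Qed.

Lemma indic_lt1 u v : u < v -> indic _ (Rlt_dec u v) = 1.
Proof. intros H. unfold indic. destruct (Rlt_dec u v); [reflexivity|contradiction]. Qed.

Lemma indic_lt0 u v : ~ u < v -> indic _ (Rlt_dec u v) = 0.
Proof. intros H. unfold indic. destruct (Rlt_dec u v); [contradiction|reflexivity]. Qed.

Lemma pigeonhole (g : nat -> nat) m :
  (forall i, (i <= m)%nat -> (g i < m)%nat) ->
  exists i j, (i < j <= m)%nat /\ g i = g j.
Proof.
  intros Hg. apply NNPP. intros Hno.
  assert (Hnd : NoDup (map g (seq 0 (S m)))).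
  { apply NoDup_map_NoDup_ForallPairs; [|apply seq_NoDup].
    intros i j Hi Hj E. apply in_seq in Hi, Hj.
    destruct (Nat.lt_trichotomy i j) as [L|[L|L]]; auto; exfalso; apply Hno.
    - exists i, j. split; [lia|auto].
    - exists j, i. split; [lia|auto]. }
  assert (Hincl : incl (map g (seq 0 (S m))) (seq 0 m)).
  { intros y Hy. apply in_map_iff in Hy. destruct Hy as [i [<- Hi]].
    apply in_seq in Hi. apply in_seq. specialize (Hg i). lia. }
  pose proof (NoDup_incl_length Hnd Hincl) as Hlen.
  rewrite length_map, !length_seq in Hlen. lia.
Qed.

Lemma covering_bound (g : nat -> nat) m d :
  (forall p, (p < m)%nat -> exists k, (k < d)%nat /\ g k = p) -> (m <= d)%nat.
Proof.
  intros Hcov.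
  assert (Hincl : incl (seq 0 m) (map g (seq 0 d))).
  { intros p Hp. apply in_seq in Hp. destruct (Hcov p ltac:(lia)) as [k [Hk <-]].
    apply in_map, in_seq. lia. }
  pose proof (NoDup_incl_length (seq_NoDup m 0) Hincl) as Hlen.
  rewrite length_map, !length_seq in Hlen. exact Hlen.
Qed.

Lemma least_positive (P : nat -> Prop) u : P u -> (0 < u)%nat ->
  exists d, (0 < d <= u)%nat /\ P d /\ forall k, (0 < k < d)%nat -> ~ P k.
Proof.
  induction u as [u IH] using (well_founded_induction Wf_nat.lt_wf). intros Pu Hu.
  destruct (classic (exists k, (0 < k < u)%nat /\ P k)) as [[k [Hk Pk]]|Hno].
  - destruct (IH k ltac:(lia) Pk ltac:(lia)) as [d [Hd [Pd Hmin]]].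
    exists d. split; [lia|auto].
  - exists u. split; [lia|]. split; auto. intros k Hk Pk. apply Hno. exists k; auto.
Qed.

Definition Lip (K : R) (g : R -> R) : Prop :=
  forall x y, Rabs (g x - g y) <= K * Rabs (x - y).

Lemma Lip_cont K g : 0 < K -> Lip K g -> continuity g.
Proof.
  intros HK Hg x eps Heps. exists (eps / K). split; [apply Rdiv_lt_0_compat; auto|].
  intros y [_ Hy]. simpl in *. unfold R_dist in *.
  apply Rle_lt_trans with (K * Rabs (y - x)); [apply Hg|].
  apply Rmult_lt_compat_l with (r := K) in Hy; auto.
  replace (K * (eps / K)) with eps in Hy by (field; lra). exact Hy.
Qed.

Lemma Lip_comp K1 K2 g h :
  0 <= K1 -> Lip K1 g -> Lip K2 h -> Lip (K1 * K2) (fun x => g (h x)).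
Proof.
  intros HK1 Hg Hh x y. eapply Rle_trans; [apply Hg|].
  rewrite Rmult_assoc. apply Rmult_le_compat_l; auto.
Qed.

Definition between (u v t : R) : Prop := (u <= t <= v) \/ (v <= t <= u).

Lemma between_trans u v p q t :
  between u v p -> between u v q -> between p q t -> between u v t.
Proof. unfold between. intros; lra. Qed.

Lemma IVT_between g p q w :
  continuity g -> between (g p) (g q) w -> exists t, between p q t /\ g t = w.
Proof.
  intros Hg Hw. set (h := fun t => g t - w).
  assert (Hh : continuity h) by (apply continuity_minus; [auto|apply continuity_const; intros ? ?; auto]).
  unfold between in Hw.
  destruct (Rle_dec p q) as [Hpq|Hpq].
  - destruct (IVT_cor h p q Hh Hpq) as [t [Ht E]]; [unfold h; destruct Hw; nra|].
    exists t. unfold h in E. split; [left; auto|lra].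
  - destruct (IVT_cor h q p Hh ltac:(lra)) as [t [Ht E]]; [unfold h; destruct Hw; nra|].
    exists t. unfold h in E. split; [right; auto|lra].
Qed.

Lemma lub_approx (E : R -> Prop) m d :
  is_lub E m -> 0 < d -> exists e, E e /\ m - d < e <= m.
Proof.
  intros [Hub Hleast] Hd. apply NNPP. intros Hno.
  assert (Hup : is_upper_bound E (m - d)).
  { intros e He. destruct (Rle_dec e (m - d)); auto. exfalso. apply Hno.
    exists e. split; auto. split; [lra|apply Hub; auto]. }
  apply Hleast in Hup. lra.
Qed.

(* The last point of [p, q] where a Lipschitz map takes the value c:
   the level set is closed, so its supremum belongs to it. *)
Lemma last_hit K g p q c :
  0 < K -> Lip K g -> p <= q -> g p = c ->
  exists m, p <= m <= q /\ g m = c /\ forall t, m < t <= q -> g t <> c.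
Proof.
  intros HK Hg Hpq Hp.
  set (E := fun t => p <= t <= q /\ g t = c).
  destruct (completeness E) as [m Hm].
  { exists q. intros t [Ht _]. lra. }
  { exists p. split; [lra|auto]. }
  assert (Hpm : p <= m) by (apply (proj1 Hm); split; [lra|auto]).
  assert (Hmq : m <= q) by (apply (proj2 Hm); intros t [Ht _]; lra).
  exists m. split; [lra|split].
  - destruct (Req_dec (g m) c) as [|Hne]; auto. exfalso.
    set (d := Rabs (g m - c) / (2 * K)).
    assert (Hpos : 0 < Rabs (g m - c)) by (apply Rabs_pos_lt; lra).
    assert (Hd : 0 < d) by (unfold d; apply Rdiv_lt_0_compat; lra).
    destruct (lub_approx E m d Hm Hd) as [e [[He Hge] Hem]].
    pose proof (Hg m e) as Hme. rewrite Hge, (Rabs_right (m - e)) in Hme by lra.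
    assert (Hlt : K * (m - e) < K * d) by (apply Rmult_lt_compat_l; lra).
    unfold d in Hlt. replace (K * (Rabs (g m - c) / (2 * K))) with (Rabs (g m - c) / 2) in Hlt
      by (field; lra). lra.
  - intros t Ht Hgt. assert (t <= m) by (apply (proj1 Hm); split; [lra|auto]). lra.
Qed.

Lemma Lip_reflect K g : Lip K g -> Lip K (fun x => g (- x)).
Proof.
  intros Hg x y. rewrite <- (Rabs_Ropp (x - y)). replace (- (x - y)) with (- x - - y) by ring.
  apply Hg.
Qed.

Lemma Lip_opp K g : Lip K g -> Lip K (fun x => - g x).
Proof.
  intros Hg x y. replace (- g x - - g y) with (- (g x - g y)) by ring.
  rewrite Rabs_Ropp. apply Hg.
Qed.

Lemma first_hit K g p q d :
  0 < K -> Lip K g -> p <= q -> g q = d ->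
  exists r, p <= r <= q /\ g r = d /\ forall t, p <= t < r -> g t <> d.
Proof.
  intros HK Hg Hpq Hq.
  destruct (last_hit K (fun x => g (- x)) (- q) (- p) d HK (Lip_reflect K g Hg) ltac:(lra))
    as [m [Hm [Hgm Hafter]]]; [rewrite Ropp_involutive; auto|].
  exists (- m). split; [lra|split; auto].
  intros t Ht. replace t with (- - t) by ring. apply Hafter. lra.
Qed.

(* Covering lemma: if g maps p to c and q to d, some subinterval [l, r] of
   [p, q] is mapped by g onto [c, d] with endpoints going to endpoints:
   take the last c-point l, then the first d-point r after it. *)
Lemma covering_increasing K g p q c d :
  0 < K -> Lip K g -> p <= q -> g p = c -> g q = d -> c < d ->
  exists l r, p <= l <= r /\ r <= q /\ g l = c /\ g r = d /\
    forall t, l <= t <= r -> c <= g t <= d.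
Proof.
  intros HK Hg Hpq Hp Hq Hcd.
  assert (Hcont := Lip_cont K g HK Hg).
  destruct (last_hit K g p q c HK Hg Hpq Hp) as [l [Hl [Hgl Hafter]]].
  destruct (first_hit K g l q d HK Hg ltac:(lra) Hq) as [r [Hr [Hgr Hbefore]]].
  exists l, r. do 4 (split; [lra || auto|]).
  intros t Ht.
  destruct (Req_dec t l) as [->|Htl]; [lra|].
  destruct (Req_dec t r) as [->|Htr]; [lra|].
  split; apply Rnot_lt_le; intros Hout.
  - destruct (IVT_between g t q c Hcont) as [t' [Ht' Et']]; [left; lra|].
    unfold between in Ht'. apply (Hafter t'); [lra|auto].
  - destruct (IVT_between g l t d Hcont) as [t' [Ht' Et']]; [left; lra|].
    unfold between in Ht'. apply (Hbefore t'); [lra|auto].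
Qed.

Lemma covering_sorted K g p q c d :
  0 < K -> Lip K g -> p <= q -> g p = c -> g q = d -> c <> d ->
  exists l r, p <= l <= q /\ p <= r <= q /\ g l = c /\ g r = d /\
    forall t, between l r t -> between c d (g t).
Proof.
  intros HK Hg Hpq Hp Hq Hcd.
  destruct (Rlt_dec c d) as [Hlt|Hge].
  - destruct (covering_increasing K g p q c d HK Hg Hpq Hp Hq Hlt)
      as [l [r [Hl [Hr [El [Er Hlr]]]]]].
    exists l, r. do 4 (split; [lra || auto|]).
    intros t Ht. left. apply Hlr. destruct Ht; lra.
  - destruct (covering_increasing K (fun x => - g x) p q (- c) (- d) HK (Lip_opp K g Hg) Hpq
                ltac:(lra) ltac:(lra) ltac:(lra)) as [l [r [Hl [Hr [El [Er Hlr]]]]]].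
    exists l, r. do 4 (split; [lra|]).
    intros t Ht. specialize (Hlr t ltac:(destruct Ht; lra)). right. lra.
Qed.

Lemma covering K g p q c d :
  0 < K -> Lip K g -> g p = c -> g q = d -> c <> d ->
  exists l r, between p q l /\ between p q r /\ g l = c /\ g r = d /\
    forall t, between l r t -> between c d (g t).
Proof.
  intros HK Hg Hp Hq Hcd.
  destruct (Rle_dec p q) as [Hpq|Hqp].
  - destruct (covering_sorted K g p q c d HK Hg Hpq Hp Hq Hcd) as [l [r [Hl [Hr Hlr]]]].
    exists l, r. unfold between. split; [lra|split; [lra|auto]].
  - destruct (covering_sorted K (fun x => g (- x)) (- p) (- q) c d HK (Lip_reflect K g Hg)
                ltac:(lra)) as [l [r [Hl [Hr [El [Er Hlr]]]]]];
      try (rewrite Ropp_involutive; auto); auto.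
    exists (- l), (- r). unfold between. do 4 (split; [lra || auto|]).
    intros t Ht. specialize (Hlr (- t)). rewrite Ropp_involutive in Hlr.
    apply Hlr. unfold between in *. lra.
Qed.

Lemma Int_part_eq z x : IZR z <= x < IZR z + 1 -> Int_part x = z.
Proof.
  intros [H1 H2]. destruct (base_Int_part x) as [B1 B2].
  assert (L1 : IZR z < IZR (Int_part x + 1)) by (rewrite plus_IZR; simpl; lra).
  assert (L2 : IZR (Int_part x) < IZR (z + 1)) by (rewrite plus_IZR; simpl; lra).
  apply lt_IZR in L1. apply lt_IZR in L2. lia.
Qed.

Lemma Int_part_mono x y : x <= y -> (Int_part x <= Int_part y)%Z.
Proof.
  intros Hxy. destruct (base_Int_part x), (base_Int_part y).
  assert (L : IZR (Int_part x) < IZR (Int_part y + 1)) by (rewrite plus_IZR; simpl; lra).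
  apply lt_IZR in L. lia.
Qed.

Definition fl (x : R) : nat := Z.to_nat (Int_part x).

Lemma fl_spec x : 0 <= x -> INR (fl x) <= x < INR (fl x) + 1.
Proof.
  intros Hx. destruct (base_Int_part x) as [B1 B2].
  assert (Hp : (0 <= Int_part x)%Z).
  { assert (L : IZR (-1) < IZR (Int_part x)) by lra. apply lt_IZR in L. lia. }
  unfold fl. rewrite INR_IZR_INZ, Z2Nat.id by auto. lra.
Qed.

Lemma fl_nat i x : INR i <= x < INR i + 1 -> fl x = i.
Proof.
  intros H. unfold fl. rewrite (Int_part_eq (Z.of_nat i) x), Nat2Z.id; auto.
  rewrite <- INR_IZR_INZ. auto.
Qed.

Lemma INR_lt_succ p q : INR p < INR q + 1 -> (p <= q)%nat.
Proof. intros H. rewrite <- S_INR in H. apply INR_lt in H. lia. Qed.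

Lemma INR_lt_step m k : (m < k)%nat -> INR m + 1 <= INR k.
Proof. intros H. rewrite <- S_INR. apply le_INR. lia. Qed.

Section Pattern.

Variables (s : nat -> nat) (n : nat).
Hypothesis Hn : (2 <= n)%nat.
Hypothesis Hcyc : is_cyclic_perm s n.

Definition orb (k : nat) : nat := Nat.iter k s 0%nat.

Lemma s_lt i : (i < n)%nat -> (s i < n)%nat.
Proof. destruct Hcyc as [H _]. apply H. Qed.

Lemma s_inj i j : (i < n)%nat -> (j < n)%nat -> s i = s j -> i = j.
Proof. destruct Hcyc as [_ [H _]]. apply H. Qed.

Lemma orb_lt k : (orb k < n)%nat.
Proof. induction k; simpl; [lia|]. apply s_lt. auto. Qed.

Lemma orb_add p q : orb (p + q) = Nat.iter p s (orb q).
Proof. apply Nat.iter_add. Qed.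

(* Injectivity of s: a coincidence orb i = orb j is a return of 0 after j - i steps. *)
Lemma orb_diff i j : (i < j)%nat -> orb i = orb j -> orb (j - i) = 0%nat.
Proof.
  revert j. induction i as [|i IH]; intros j Hij E.
  - rewrite Nat.sub_0_r, <- E. reflexivity.
  - destruct j as [|j]; [lia|]. simpl in E. apply s_inj in E; try apply orb_lt.
    apply IH; [lia|auto].
Qed.

Lemma orb_period d q r : orb d = 0%nat -> orb (q * d + r) = orb r.
Proof.
  intros Hd. induction q as [|q IH]; [reflexivity|].
  replace (S q * d + r)%nat with (d + (q * d + r))%nat by lia.
  rewrite orb_add, IH, <- orb_add, Nat.add_comm, orb_add, Hd. reflexivity.
Qed.

(* Any return time of 0 is at least n, since one period visits all of P. *)
Lemma return_ge d : (0 < d)%nat -> orb d = 0%nat -> (n <= d)%nat.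
Proof.
  intros Hd Hret. apply (covering_bound orb).
  intros p Hp. destruct Hcyc as [_ [_ Hvisit]]. destruct (Hvisit p Hp) as [k Hk].
  exists (k mod d). split; [apply Nat.mod_upper_bound; lia|].
  rewrite <- Hk. fold (orb k). rewrite (Nat.div_mod_eq k d) at 2.
  rewrite Nat.mul_comm, orb_period; auto.
Qed.

(* By pigeonhole 0 returns within n steps, hence after exactly n steps. *)
Lemma orb_n : orb n = 0%nat.
Proof.
  destruct (pigeonhole orb n) as [i [j [Hij E]]]; [intros; apply orb_lt|].
  apply orb_diff in E; [|lia].
  assert (n <= j - i)%nat by (apply return_ge; auto; lia).
  replace n with (j - i)%nat by lia. exact E.
Qed.

Lemma orb_plus_n k : orb (n + k) = orb k.
Proof. rewrite Nat.add_comm, orb_add. fold (orb n). rewrite orb_n. reflexivity. Qed.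

Lemma orb_mod k : orb k = orb (k mod n).
Proof.
  rewrite (Nat.div_mod_eq k n) at 1. rewrite Nat.mul_comm.
  apply orb_period, orb_n.
Qed.

Lemma orb_inj i j : (i < n)%nat -> (j < n)%nat -> orb i = orb j -> i = j.
Proof.
  intros Hi Hj E.
  destruct (Nat.lt_trichotomy i j) as [H|[H|H]]; auto; exfalso.
  - apply orb_diff in E; auto. apply return_ge in E; lia.
  - symmetry in E. apply orb_diff in E; auto. apply return_ge in E; lia.
Qed.

Lemma orb_surj p : (p < n)%nat -> exists k, (k < n)%nat /\ orb k = p.
Proof.
  intros Hp. destruct Hcyc as [_ [_ Hvisit]]. destruct (Hvisit p Hp) as [k Hk].
  exists (k mod n). split; [apply Nat.mod_upper_bound; lia|].
  rewrite <- orb_mod. exact Hk.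
Qed.

Lemma sumR_orb (g : nat -> R) : sumR (fun k => g (orb k)) n = sumR g n.
Proof. apply sumR_reindex; [intros; apply orb_lt|intros; apply orb_inj; auto]. Qed.

Lemma s_neq i : (i < n)%nat -> s i <> i.
Proof.
  intros Hi E. destruct (orb_surj i Hi) as [k [Hk Ek]].
  assert (Hret : orb k = orb (S k)) by (simpl; fold (orb k); rewrite Ek; auto).
  apply orb_diff in Hret; [|lia]. replace (S k - k)%nat with 1%nat in Hret by lia.
  apply return_ge in Hret; lia.
Qed.

Notation f := (plin s n).

Definition lin (i : nat) (x : R) : R :=
  INR (s i) + (x - INR i) * (INR (s (S i)) - INR (s i)).

Definition pidx (x : R) : nat := Nat.min (fl x) (n - 2).

Lemma pidx_le x : (pidx x <= n - 2)%nat.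
Proof. unfold pidx. lia. Qed.

Lemma pidx_mono x y : x <= y -> (pidx x <= pidx y)%nat.
Proof. intros H. unfold pidx, fl. apply Int_part_mono in H. lia. Qed.

Lemma plin_piece i x : (i <= n - 2)%nat -> INR i <= x <= INR i + 1 -> f x = lin i x.
Proof.
  intros Hi [H1 H2]. change (f x) with (lin (pidx x) x).
  destruct (Rlt_dec x (INR i + 1)) as [Hlt|Hend].
  - unfold pidx. rewrite (fl_nat i x) by lra. f_equal. lia.
  - assert (E : x = INR (S i)) by (rewrite S_INR; lra).
    unfold pidx. rewrite (fl_nat (S i) x) by (rewrite E, S_INR; lra).
    destruct (Nat.eq_dec i (n - 2)) as [->|Hne].
    + replace (Nat.min (S (n - 2)) (n - 2)) with (n - 2)%nat by lia. reflexivity.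
    + replace (Nat.min (S i) (n - 2)) with (S i) by lia.
      unfold lin. rewrite E, S_INR. ring.
Qed.

Lemma plin_convex i x : (i <= n - 2)%nat -> INR i <= x <= INR i + 1 ->
  f x = (1 - (x - INR i)) * INR (s i) + (x - INR i) * INR (s (S i)).
Proof. intros Hi Hx. rewrite (plin_piece i x Hi Hx). unfold lin. ring. Qed.

Lemma plin_nat i : (i < n)%nat -> f (INR i) = INR (s i).
Proof.
  intros Hi. destruct (Nat.eq_dec i (n - 1)) as [->|Hne].
  - assert (E : INR (n - 1) = INR (n - 2) + 1) by (rewrite <- S_INR; f_equal; lia).
    rewrite (plin_piece (n - 2)) by (lia || lra). unfold lin.
    replace (S (n - 2)) with (n - 1)%nat by lia. rewrite E. ring.
  - rewrite (plin_piece i) by (lia || lra). unfold lin. ring.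
Qed.

Lemma piece_exists x : 0 <= x <= INR (n - 1) ->
  exists i, (i <= n - 2)%nat /\ INR i <= x <= INR i + 1.
Proof.
  intros Hx. destruct (fl_spec x ltac:(lra)) as [H1 H2].
  destruct (Compare_dec.le_lt_dec (fl x) (n - 2)) as [Hle|Hgt].
  - exists (fl x). split; [auto|lra].
  - exists (n - 2)%nat. split; [lia|].
    assert (INR (n - 1) <= INR (fl x)) by (apply le_INR; lia).
    assert (INR (n - 1) = INR (n - 2) + 1) by (rewrite <- S_INR; f_equal; lia). lra.
Qed.

Lemma INR_n1 : INR (n - 1) = INR n - 1.
Proof. rewrite minus_INR by lia. simpl. lra. Qed.

Lemma f_range x : 0 <= x <= INR (n - 1) -> 0 <= f x <= INR (n - 1).
Proof.
  intros Hx. destruct (piece_exists x Hx) as [i [Hi Hxi]].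
  rewrite (plin_convex i x Hi Hxi).
  assert (Hs0 := INR_lt_step _ _ (s_lt i ltac:(lia))).
  assert (Hs1 := INR_lt_step _ _ (s_lt (S i) ltac:(lia))).
  pose proof (pos_INR (s i)). pose proof (pos_INR (s (S i))).
  rewrite INR_n1. set (t := x - INR i). assert (0 <= t <= 1) by (unfold t; lra).
  split; nra.
Qed.

Lemma iter_range k x : 0 <= x <= INR (n - 1) -> 0 <= Nat.iter k f x <= INR (n - 1).
Proof. intros H. induction k; simpl; auto. apply f_range; auto. Qed.

Lemma iter_nat k p : (p < n)%nat -> Nat.iter k f (INR p) = INR (Nat.iter k s p).
Proof.
  intros Hp. induction k as [|k IH]; simpl; auto. rewrite IH. apply plin_nat.
  clear IH. induction k; simpl; [auto|apply s_lt; auto].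
Qed.

(* f is Lipschitz with constant n: each slope is at most n in absolute value. *)

Lemma slope_bound i : (i <= n - 2)%nat -> Rabs (INR (s (S i)) - INR (s i)) <= INR n.
Proof.
  intros Hi. assert (A1 := lt_INR _ _ (s_lt i ltac:(lia))).
  assert (A2 := lt_INR _ _ (s_lt (S i) ltac:(lia))).
  pose proof (pos_INR (s i)). pose proof (pos_INR (s (S i))). apply Rabs_le. lra.
Qed.

Lemma lin_Lip i x y : (i <= n - 2)%nat -> Rabs (lin i x - lin i y) <= INR n * Rabs (x - y).
Proof.
  intros Hi. unfold lin.
  replace (_ - _) with ((INR (s (S i)) - INR (s i)) * (x - y)) by ring.
  rewrite Rabs_mult. apply Rmult_le_compat_r; [apply Rabs_pos|apply slope_bound; auto].
Qed.

Lemma pidx_next x y : (pidx x < pidx y)%nat ->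
  x < INR (pidx x) + 1 <= y /\ pidx (INR (pidx x) + 1) = S (pidx x).
Proof.
  intros Hxy. assert (Hy := pidx_le y). set (i := pidx x) in *.
  assert (Hflx : fl x = i) by (unfold i, pidx in *; lia).
  assert (Hfly : (S i <= fl y)%nat) by (unfold i, pidx in *; lia).
  assert (Hy0 : 0 <= y).
  { apply Rnot_lt_le. intros Hneg. destruct (base_Int_part y) as [B _].
    assert (Int_part y < 0)%Z by (apply lt_IZR; simpl; lra). unfold fl in Hfly. lia. }
  split; [split|].
  - destruct (Rle_dec 0 x) as [Hx0|Hx0]; [rewrite <- Hflx; apply fl_spec; auto|].
    pose proof (pos_INR i). lra.
  - pose proof (fl_spec y Hy0). pose proof (le_INR _ _ Hfly). rewrite S_INR in *. lra.
  - unfold pidx. rewrite (fl_nat (S i)) by (rewrite S_INR; lra). lia.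
Qed.

Lemma plin_Lip : Lip (INR n) f.
Proof.
  assert (Hord : forall d x y, x <= y -> (pidx y - pidx x = d)%nat ->
            Rabs (f y - f x) <= INR n * (y - x)).
  { induction d as [|d IH]; intros x y Hxy Hd.
    - assert (E : pidx x = pidx y) by (pose proof (pidx_mono x y Hxy); lia).
      change (Rabs (lin (pidx y) y - lin (pidx x) x) <= INR n * (y - x)).
      rewrite E, <- (Rabs_right (y - x)) by lra. apply lin_Lip, pidx_le.
    - destruct (pidx_next x y ltac:(lia)) as [[Hxb Hby] Hb].
      set (i := pidx x) in *. set (b := INR i + 1) in *.
      assert (IHb := IH b y Hby ltac:(lia)).
      assert (Hxb' : Rabs (f b - f x) <= INR n * (b - x)).
      { rewrite (plin_piece i b) by (pose proof (pidx_le y); unfold b; lia || lra).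
        change (f x) with (lin i x). rewrite <- (Rabs_right (b - x)) by lra.
        apply lin_Lip, pidx_le. }
      replace (f y - f x) with ((f y - f b) + (f b - f x)) by ring.
      eapply Rle_trans; [apply Rabs_triang|]. lra. }
  intros x y. destruct (Rle_dec x y) as [Hxy|Hyx].
  - rewrite Rabs_minus_sym, (Rabs_minus_sym x y), (Rabs_right (y - x)) by lra.
    apply (Hord _ x y Hxy eq_refl).
  - rewrite (Rabs_right (x - y)) by lra. apply (Hord _ y x ltac:(lra) eq_refl).
Qed.

Lemma n_pos : 0 < INR n.
Proof. apply lt_0_INR. lia. Qed.

Lemma iter_Lip k : Lip (INR n ^ k) (Nat.iter k f).
Proof.
  induction k as [|k IH]; simpl.
  - intros x y. unfold Lip. rewrite Rmult_1_l. apply Rle_refl.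
  - apply (Lip_comp (INR n) (INR n ^ k) f (Nat.iter k f) (pos_INR n) plin_Lip IH).
Qed.

Lemma iter_cont k : continuity (Nat.iter k f).
Proof. apply (Lip_cont (INR n ^ k)); [apply pow_lt, n_pos|apply iter_Lip]. Qed.

Section Convergent.

Variable a : R.
Hypothesis Hconv : convergent s n.
Hypothesis Ha : 0 <= a <= INR (n - 1).
Hypothesis Hfa : f a = a.

(* a is not a point of P, since s has no fixed point. *)
Lemma a_not_nat i : (i < n)%nat -> INR i <> a.
Proof.
  intros Hi E. pose proof (plin_nat i Hi) as Hfi. rewrite E, Hfa, <- E in Hfi.
  apply INR_eq in Hfi. apply (s_neq i Hi). auto.
Qed.

Definition k0 : nat := fl a.

Lemma a_in : INR k0 < a < INR k0 + 1 /\ (k0 <= n - 2)%nat.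
Proof.
  destruct (fl_spec a ltac:(lra)) as [H1 H2]. fold k0 in H1, H2.
  assert (Hk : (k0 <= n - 1)%nat) by (apply INR_lt_succ; lra).
  assert (INR k0 <> a) by (apply a_not_nat; lia).
  split; [lra|]. destruct (Nat.eq_dec k0 (n - 1)) as [E|]; [|lia].
  rewrite E in *. lra.
Qed.

(* f moves k0 to the right and k0+1 to the left; otherwise the convex
   combination f a of s k0 and s (k0+1) could not equal a. *)
Lemma k0_moves : (k0 < s k0)%nat /\ (s (S k0) < S k0)%nat.
Proof.
  destruct a_in as [Hain Hk0].
  assert (E := plin_convex k0 a Hk0 ltac:(lra)). rewrite Hfa in E.
  assert (N1 := s_neq k0 ltac:(lia)). assert (N2 := s_neq (S k0) ltac:(lia)).
  set (t := a - INR k0) in E. assert (0 < t < 1) by (unfold t; lra).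
  destruct (Nat.lt_trichotomy (s k0) k0) as [L1|[L1|L1]]; [|contradiction|];
  destruct (Nat.lt_trichotomy (s (S k0)) (S k0)) as [L2|[L2|L2]]; try contradiction.
  - apply INR_lt_step in L1. apply INR_lt_step in L2. rewrite S_INR in L2.
    exfalso. unfold t in *. nra.
  - exfalso. apply (Hconv k0 (S k0)); [lia|lia|auto].
  - split; auto.
  - exfalso. apply INR_lt_step in L1. apply INR_lt_step in L2.
    rewrite !S_INR in *. unfold t in *. nra.
Qed.

Lemma left_moves_right i : (i <= k0)%nat -> (i < s i)%nat.
Proof.
  intros Hi. destruct (Nat.eq_dec i k0) as [->|]; [apply k0_moves|].
  destruct a_in as [_ Hk0].
  destruct (Nat.lt_trichotomy (s i) i) as [L|[L|L]]; auto; exfalso.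
  - apply (Hconv i k0); [lia|lia|]. split; auto. apply k0_moves.
  - apply (s_neq i); [lia|auto].
Qed.

Lemma right_moves_left j : (S k0 <= j < n)%nat -> (s j < j)%nat.
Proof.
  intros Hj. destruct (Nat.eq_dec j (S k0)) as [->|]; [apply k0_moves|].
  destruct (Nat.lt_trichotomy (s j) j) as [L|[L|L]]; auto; exfalso.
  - apply (s_neq j); [lia|auto].
  - apply (Hconv (S k0) j); [lia|lia|]. split; auto. apply k0_moves.
Qed.

Definition lam : R := INR (s (S k0)) - INR (s k0).

Lemma lam_le : lam <= -1.
Proof.
  unfold lam. destruct k0_moves as [L1 L2].
  apply INR_lt_step in L1. apply INR_lt_step in L2. rewrite S_INR in L2. lra.
Qed.

Lemma near_a x : INR k0 <= x <= INR k0 + 1 -> f x - a = lam * (x - a).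
Proof.
  intros Hx. destruct a_in as [Hain Hk0].
  rewrite <- Hfa at 1. rewrite (plin_piece k0 x Hk0 Hx), (plin_piece k0 a Hk0 ltac:(lra)).
  unfold lin, lam. ring.
Qed.

Lemma sign_f x : 0 <= x <= INR (n - 1) -> (x < a -> x < f x) /\ (a < x -> f x < x).
Proof.
  intros Hx. destruct (piece_exists x Hx) as [i [Hi Hxi]].
  destruct a_in as [Hain Hk0]. pose proof lam_le.
  destruct (Nat.lt_trichotomy i k0) as [Hlt|[->|Hgt]].
  - assert (Hxa : x < a) by (assert (INR (S i) <= INR k0) by (apply le_INR; lia);
                            rewrite S_INR in *; lra).
    split; [intros _|lra].
    rewrite (plin_convex i x Hi Hxi).
    assert (L1 := INR_lt_step _ _ (left_moves_right i ltac:(lia))).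
    assert (L2 := INR_lt_step _ _ (left_moves_right (S i) ltac:(lia))).
    rewrite S_INR in *. set (t := x - INR i) in *. assert (0 <= t <= 1) by (unfold t; lra).
    replace x with ((1 - t) * INR i + t * (INR i + 1)) at 1 by (unfold t; ring). nra.
  - pose proof (near_a x Hxi). split; intros; nra.
  - assert (Hxa : a < x) by (assert (INR (S k0) <= INR i) by (apply le_INR; lia);
                            rewrite S_INR in *; lra).
    split; [lra|intros _].
    rewrite (plin_convex i x Hi Hxi).
    assert (L1 := INR_lt_step _ _ (right_moves_left i ltac:(lia))).
    assert (L2 := INR_lt_step _ _ (right_moves_left (S i) ltac:(lia))).
    rewrite S_INR in *. set (t := x - INR i) in *. assert (0 <= t <= 1) by (unfold t; lra).
    replace x with ((1 - t) * INR i + t * (INR i + 1)) at 1 by (unfold t; ring). nra.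
Qed.

Lemma fix_unique x : 0 <= x <= INR (n - 1) -> f x = x -> x = a.
Proof.
  intros Hx E. destruct (sign_f x Hx) as [H1 H2].
  destruct (Rtotal_order x a) as [L|[L|L]]; auto; [apply H1 in L|apply H2 in L]; lra.
Qed.

Lemma iter_fix_a k : Nat.iter k f a = a.
Proof. induction k as [|k IH]; simpl; [auto|]. rewrite IH; auto. Qed.

Lemma periodic_avoids_a z p : z <> a -> (0 < p)%nat -> Nat.iter p f z = z ->
  forall k, Nat.iter k f z <> a.
Proof.
  intros Nz Hp Hz k E.
  assert (Hmult : forall q, Nat.iter (q * p) f z = z).
  { induction q as [|q IH]; simpl; auto. rewrite Nat.iter_add, IH. auto. }
  apply Nz. rewrite <- (Hmult k).
  replace (k * p)%nat with ((k * p - k) + k)%nat by nia.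
  rewrite Nat.iter_add, E. apply iter_fix_a.
Qed.

(* Since f x - x has the sign of a - x, a turn is a crossing of a in either
   direction; around a periodic orbit both directions occur equally often. *)

Definition right (y : R) : R := indic _ (Rlt_dec a y).
Definition cross (y : R) : R := right y * indic _ (Rlt_dec (f y) a).
Definition turn (y : R) : R := indic _ (Rlt_dec ((f y - y) * (f (f y) - f y)) 0).

Lemma turn_decomp y : 0 <= y <= INR (n - 1) -> y <> a -> f y <> a ->
  turn y = 2 * cross y + (right (f y) - right y).
Proof.
  intros Hy N1 N2. assert (Hfy := f_range y Hy).
  destruct (sign_f y Hy) as [S1 S2]. destruct (sign_f (f y) Hfy) as [T1 T2].
  assert (y < a \/ a < y) as [L1|L1] by lra; assert (f y < a \/ a < f y) as [L2|L2] by lra;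
  try specialize (S1 L1); try specialize (S2 L1); try specialize (T1 L2); try specialize (T2 L2);
  unfold turn, cross, right, indic;
  repeat match goal with |- context [Rlt_dec ?u ?v] => destruct (Rlt_dec u v) end; nra.
Qed.

Lemma orbit_turns z m : 0 <= z <= INR (n - 1) -> Nat.iter m f z = z ->
  (forall k, Nat.iter k f z <> a) ->
  sumR (fun k => turn (Nat.iter k f z)) m = 2 * sumR (fun k => cross (Nat.iter k f z)) m.
Proof.
  intros Hz Hm Hav.
  rewrite (sumR_ext _ (fun k => 2 * cross (Nat.iter k f z) +
     (right (Nat.iter (S k) f z) - right (Nat.iter k f z)))).
  - rewrite sumR_plus, sumR_scal, (sumR_tele (fun k => right (Nat.iter k f z))), Hm. simpl. lra.
  - intros k Hk. apply turn_decomp; [apply iter_range; auto|apply Hav|apply (Hav (S k))].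
Qed.

Lemma ornum_crossings z m : 0 <= z <= INR (n - 1) -> (0 < m)%nat -> Nat.iter m f z = z ->
  (forall k, Nat.iter k f z <> a) ->
  ornum f z m = sumR (fun k => cross (Nat.iter k f z)) m / INR m.
Proof.
  intros Hz Hm Hmz Hav. unfold ornum.
  change (sumR (fun k => turn (Nat.iter k f z)) m / (2 * INR m) =
          sumR (fun k => cross (Nat.iter k f z)) m / INR m).
  rewrite orbit_turns; auto. assert (0 < INR m) by (apply lt_0_INR; lia). field. lra.
Qed.

Lemma phi_cross p : (p < n)%nat -> phi s a p = cross (INR p).
Proof. intros Hp. unfold phi, cross, right. rewrite plin_nat; auto. Qed.

Lemma phi_left p : INR p < a -> phi s a p = 0.
Proof. intros H. unfold phi. rewrite indic_lt0 by lra. lra. Qed.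

Lemma phi_right p : a < INR p -> phi s a p = indic _ (Rlt_dec (INR (s p)) a).
Proof. intros H. unfold phi. rewrite indic_lt1 by lra. lra. Qed.

Definition crossings (k : nat) : R := sumR (fun j => phi s a (orb j)) k.

Lemma iter_orb k : Nat.iter k f 0 = INR (orb k).
Proof. change 0 with (INR 0). apply iter_nat. lia. Qed.

Lemma orb_avoids_a k : Nat.iter k f 0 <> a.
Proof. rewrite iter_orb. apply a_not_nat, orb_lt. Qed.

Lemma rho_crossings : INR n * rho_pat s n = crossings n.
Proof.
  unfold rho_pat.
  set (g := fun i => indic _ (Rlt_dec ((INR (s i) - INR i) * (INR (s (s i)) - INR (s i))) 0)).
  change (INR n * (sumR g n / (2 * INR n)) = crossings n).
  rewrite <- (sumR_orb g).
  rewrite (sumR_ext _ (fun k => turn (Nat.iter k f 0))).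
  - rewrite orbit_turns.
    + rewrite (sumR_ext _ (fun k => phi s a (orb k))).
      * pose proof n_pos. unfold crossings. field. lra.
      * intros k Hk. rewrite iter_orb, phi_cross; [reflexivity|apply orb_lt].
    + split; [lra|apply pos_INR].
    + rewrite iter_orb, orb_n. reflexivity.
    + apply orb_avoids_a.
  - intros k Hk. rewrite iter_orb. unfold g, turn.
    pose proof (orb_lt k) as Hk'. pose proof (s_lt _ Hk'). rewrite !plin_nat; auto.
Qed.

(* Two consecutive crossings cannot both go right-to-left, hence rho <= 1/2. *)
Lemma rho_le_half : rho_pat s n <= 1 / 2.
Proof.
  assert (Hshift : sumR (fun j => phi s a (orb (S j))) n = crossings n).
  { unfold crossings. rewrite (sumR_shift (fun j => phi s a (orb j))), orb_n.
    change (orb 0) with 0%nat. lra. }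
  assert (Hpair : forall k, phi s a (orb k) + phi s a (orb (S k)) <= 1).
  { intros k. simpl. fold (orb k). unfold phi, indic.
    destruct (Rlt_dec a (INR (orb k))), (Rlt_dec (INR (s (orb k))) a),
      (Rlt_dec a (INR (s (orb k)))), (Rlt_dec (INR (s (s (orb k)))) a); lra. }
  assert (H2 : crossings n + crossings n <= INR n * 1).
  { rewrite <- sumR_const. pattern (crossings n) at 2. rewrite <- Hshift. unfold crossings.
    rewrite <- (sumR_plus (fun j => phi s a (orb j)) (fun j => phi s a (orb (S j)))).
    apply sumR_le. intros k _. apply Hpair. }
  rewrite <- rho_crossings in H2. pose proof n_pos. nra.
Qed.

Lemma rho_in_set : ornum_set s n (rho_pat s n).
Proof.
  exists 0, n. assert (R0 : 0 <= 0 <= INR (n - 1)) by (split; [lra|apply pos_INR]).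
  assert (Hper : Nat.iter n f 0 = 0) by (rewrite iter_orb, orb_n; reflexivity).
  split; [auto|split; [auto|split; [auto|split]]].
  - intros k Hk E. rewrite iter_orb in E. change 0 with (INR (orb 0)) in E.
    apply INR_eq, orb_inj in E; lia.
  - rewrite ornum_crossings by (auto using orb_avoids_a; lia).
    rewrite (sumR_ext _ (fun k => phi s a (orb k))).
    + fold (crossings n). rewrite <- rho_crossings. pose proof n_pos. field. lra.
    + intros k Hk. rewrite iter_orb, phi_cross; [reflexivity|apply orb_lt].
Qed.

(* The code along the orbit of 0: each step adds rho and subtracts phi, and
   after one period the crossings add up to n rho, so the code is n-periodic. *)

Lemma code_crossings k : code s n a k = INR k * rho_pat s n - crossings k.
Proof. reflexivity. Qed.

Lemma code_S k : code s n a (S k) = code s n a k + rho_pat s n - phi s a (orb k).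
Proof. rewrite !code_crossings, S_INR. unfold crossings. simpl. lra. Qed.

Lemma code_plus_n k : code s n a (n + k) = code s n a k.
Proof.
  rewrite !code_crossings. unfold crossings.
  rewrite sumR_split, (sumR_ext (fun j => phi s a (orb (n + j))) (fun j => phi s a (orb j)))
    by (intros; rewrite orb_plus_n; auto).
  fold (crossings n) (crossings k). rewrite <- rho_crossings, plus_INR. ring.
Qed.

Lemma code_mod k : code s n a k = code s n a (k mod n).
Proof.
  rewrite (Nat.div_mod_eq k n) at 1. generalize (k / n)%nat. intros q.
  induction q as [|q IH]; [rewrite Nat.mul_0_r; reflexivity|].
  replace (n * S q + k mod n)%nat with (n + (n * q + k mod n))%nat by lia.
  rewrite code_plus_n. auto.
Qed.

Definition time (p : nat) : nat :=
  epsilon (inhabits 0%nat) (fun k => (k < n)%nat /\ orb k = p).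

Lemma time_spec p : (p < n)%nat -> (time p < n)%nat /\ orb (time p) = p.
Proof. intros Hp. unfold time. apply epsilon_spec, orb_surj; auto. Qed.

Lemma time_orb k : (k < n)%nat -> time (orb k) = k.
Proof.
  intros Hk. destruct (time_spec (orb k) (orb_lt k)) as [H1 H2]. apply orb_inj; auto.
Qed.

Definition codeP (p : nat) : R := code s n a (time p).

Lemma codeP_step p : (p < n)%nat -> codeP (s p) = codeP p + rho_pat s n - phi s a p.
Proof.
  intros Hp. destruct (time_spec p Hp) as [H1 H2]. unfold codeP.
  set (k := time p) in *.
  assert (E : s p = orb ((S k) mod n)) by (rewrite <- orb_mod; simpl; fold (orb k); congruence).
  rewrite E, time_orb by (apply Nat.mod_upper_bound; lia).
  rewrite <- code_mod, code_S. congruence.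
Qed.

Definition farther (x y : R) : Prop := (x <= y < a) \/ (a < y <= x).

Lemma convex_farther U V t :
  0 <= t <= 1 -> (1 - t) * U + t * V <> a ->
  farther U ((1 - t) * U + t * V) \/ farther V ((1 - t) * U + t * V).
Proof.
  intros Ht Hy. unfold farther. set (y := (1 - t) * U + t * V) in *.
  destruct (Rle_dec U V); destruct (Rlt_dec y a); unfold y in *; [left|right|right|left]; nra.
Qed.

(* If the code is non-decreasing, extend it to a
   function Lext on [0, n-1], constant on the gaps of P and taking at x the
   code of the nearest point of P on the far side from a.  Along any orbit
   Lext(f x) >= Lext x + rho - cross x, and telescoping around a periodic
   orbit shows that it crosses at least m rho times. *)
Section Backward.

Hypothesis Hnd : code_nondecreasing s n a.

Lemma codeP_mono p q : (p < n)%nat -> (q < n)%nat -> farther (INR p) (INR q) ->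
  codeP p <= codeP q.
Proof.
  intros Hp Hq Hpq. destruct (Nat.eq_dec p q) as [->|Hne]; [lra|].
  destruct (time_spec p Hp) as [I1 I2]. destruct (time_spec q Hq) as [J1 J2].
  assert (INR p <> INR q) by (intros E; apply INR_eq in E; auto).
  unfold codeP. apply Hnd; auto. unfold gt_a. fold (orb (time p)) (orb (time q)).
  rewrite I2, J2. unfold farther in Hpq. lra.
Qed.

(* [ceil_idx x] is the least integer >= x, for x in [0, n-1]. *)
Definition ceil_idx (x : R) : nat := (n - 1 - fl (INR (n - 1) - x))%nat.

Definition Lext (x : R) : R := if Rlt_dec x a then codeP (fl x) else codeP (ceil_idx x).

Lemma Lext_left x : 0 <= x < a ->
  (fl x <= k0)%nat /\ INR (fl x) <= x < INR (fl x) + 1 /\ Lext x = codeP (fl x).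
Proof.
  intros Hx. pose proof (fl_spec x ltac:(lra)). destruct a_in as [Hain _].
  split; [apply INR_lt_succ; lra|split; auto].
  unfold Lext. destruct (Rlt_dec x a); [reflexivity|lra].
Qed.

Lemma Lext_right x : a < x <= INR (n - 1) ->
  (S k0 <= ceil_idx x < n)%nat /\ INR (ceil_idx x) - 1 < x <= INR (ceil_idx x) /\
  Lext x = codeP (ceil_idx x).
Proof.
  intros Hx. pose proof (fl_spec (INR (n - 1) - x) ltac:(lra)) as H.
  destruct a_in as [Hain _].
  set (m := fl (INR (n - 1) - x)) in *.
  assert (Hm : (m <= n - 1)%nat) by (apply INR_lt_succ; lra).
  assert (E : INR (ceil_idx x) = INR (n - 1) - INR m)
    by (unfold ceil_idx; fold m; rewrite minus_INR; auto).
  split; [split; [apply INR_lt; lra|unfold ceil_idx; lia]|split; [lra|]].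
  unfold Lext. destruct (Rlt_dec x a); [lra|reflexivity].
Qed.

Lemma Lext_farther y p : 0 <= y <= INR (n - 1) -> (p < n)%nat -> farther (INR p) y ->
  codeP p <= Lext y.
Proof.
  intros Hy Hp Hpy. destruct a_in as [_ Hk0]. unfold farther in Hpy.
  destruct (Rlt_dec y a) as [Hya|Hya].
  - destruct (Lext_left y ltac:(lra)) as [H1 [H2 ->]].
    apply codeP_mono; [auto|lia|]. left. split; [|lra].
    apply le_INR, INR_lt_succ. lra.
  - destruct (Lext_right y ltac:(lra)) as [H1 [H2 ->]].
    apply codeP_mono; [auto|lia|]. right. split; [lra|].
    apply le_INR, INR_lt_succ. lra.
Qed.

Lemma Lext_step_via x p : 0 <= x <= INR (n - 1) -> (p < n)%nat ->
  Lext x <= codeP p -> cross x = phi s a p -> farther (INR (s p)) (f x) ->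
  Lext x + rho_pat s n - cross x <= Lext (f x).
Proof.
  intros Hx Hp HL Hc Hfar.
  assert (Hstep := codeP_step p Hp).
  assert (codeP (s p) <= Lext (f x)) by (apply Lext_farther; auto using f_range, s_lt).
  lra.
Qed.

Lemma cross_left x : x < a -> cross x = 0.
Proof. intros H. unfold cross, right. rewrite indic_lt0 by lra. lra. Qed.

Lemma cross_right x : a < x -> cross x = indic _ (Rlt_dec (f x) a).
Proof. intros H. unfold cross, right. rewrite indic_lt1 by lra. lra. Qed.

Lemma indic_farther u y : farther u y -> indic _ (Rlt_dec u a) = indic _ (Rlt_dec y a).
Proof.
  unfold farther, indic. intros H.
  destruct (Rlt_dec u a), (Rlt_dec y a); lra.
Qed.

Lemma Lext_step_left x : 0 <= x < a -> f x <> a ->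
  Lext x + rho_pat s n - cross x <= Lext (f x).
Proof.
  intros Hx Hfx. destruct (Lext_left x Hx) as [Hi [Hxi HL]]. set (i := fl x) in *.
  destruct a_in as [Hain Hk0]. pose proof lam_le.
  assert (Hx' : 0 <= x <= INR (n - 1)) by lra.
  destruct (Nat.eq_dec i k0) as [Ei|Ei].
  - (* x is in the piece of a: f x lies right of a, between a and s k0 *)
    apply (Lext_step_via x k0 Hx' ltac:(lia)).
    + rewrite HL, Ei. lra.
    + rewrite cross_left, phi_left by lra. reflexivity.
    + assert (Hnear := near_a x ltac:(rewrite Ei in Hxi; lra)).
      assert (Hk := near_a (INR k0) ltac:(lra)). rewrite plin_nat in Hk by lia.
      right. rewrite Ei in Hxi. split; nra.
  - (* x is in a piece [i, i+1] left of a: both endpoints move right *)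
    assert (Hi1 : INR (S i) < a) by (assert (INR (S i) <= INR k0) by (apply le_INR; lia); lra).
    rewrite S_INR in Hi1.
    assert (Hfx' := plin_convex i x ltac:(lia) ltac:(lra)).
    destruct (convex_farther (INR (s i)) (INR (s (S i))) (x - INR i) ltac:(lra)
                ltac:(rewrite <- Hfx'; auto)) as [Hfar|Hfar]; rewrite <- Hfx' in Hfar.
    + apply (Lext_step_via x i Hx' ltac:(lia)); [lra|rewrite cross_left, phi_left; lra|auto].
    + apply (Lext_step_via x (S i) Hx' ltac:(lia)).
      * rewrite HL. apply codeP_mono; [lia|lia|left; rewrite S_INR; lra].
      * rewrite cross_left, phi_left by (rewrite ?S_INR; lra). reflexivity.
      * auto.
Qed.

Lemma Lext_step_right x : a < x <= INR (n - 1) -> f x <> a ->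
  Lext x + rho_pat s n - cross x <= Lext (f x).
Proof.
  intros Hx Hfx. destruct (Lext_right x Hx) as [Hj [Hxj HL]].
  destruct a_in as [Hain Hk0]. pose proof lam_le.
  assert (Hx' : 0 <= x <= INR (n - 1)) by lra.
  destruct (ceil_idx x) as [|i] eqn:Ej; [lia|]. rewrite S_INR in Hxj.
  destruct (Nat.eq_dec i k0) as [->|Ei].
  - (* x is in the piece of a: f x lies left of a, between s (k0+1) and a *)
    assert (Hnear := near_a x ltac:(lra)).
    assert (Hk := near_a (INR (S k0)) ltac:(rewrite S_INR; lra)).
    rewrite plin_nat, S_INR in Hk by lia.
    apply (Lext_step_via x (S k0) Hx' ltac:(lia)).
    + rewrite HL. lra.
    + rewrite cross_right, phi_right by (rewrite ?S_INR; lra).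
      rewrite !indic_lt1 by nra. reflexivity.
    + left. split; nra.
  - (* x is in a piece [i, i+1] right of a: both endpoints move left *)
    assert (Hi : a < INR i) by (assert (INR (S k0) <= INR i) by (apply le_INR; lia);
                                rewrite S_INR in *; lra).
    assert (Hfx' := plin_convex i x ltac:(lia) ltac:(lra)).
    destruct (convex_farther (INR (s i)) (INR (s (S i))) (x - INR i) ltac:(lra)
                ltac:(rewrite <- Hfx'; auto)) as [Hfar|Hfar]; rewrite <- Hfx' in Hfar.
    + apply (Lext_step_via x i Hx' ltac:(lia)).
      * rewrite HL. apply codeP_mono; [lia|lia|right; rewrite S_INR; lra].
      * rewrite cross_right, phi_right by lra. symmetry. apply indic_farther. auto.
      * auto.
    + apply (Lext_step_via x (S i) Hx' ltac:(lia)).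
      * rewrite HL. lra.
      * rewrite cross_right, phi_right by (rewrite ?S_INR; lra). symmetry.
        apply indic_farther. auto.
      * auto.
Qed.

Lemma crossings_ge z m : 0 <= z <= INR (n - 1) ->
  Nat.iter m f z = z -> (forall k, Nat.iter k f z <> a) ->
  INR m * rho_pat s n <= sumR (fun k => cross (Nat.iter k f z)) m.
Proof.
  intros Hz Hm Hav.
  assert (Htele := sumR_tele (fun k => Lext (Nat.iter k f z)) m). cbv beta in Htele.
  rewrite Hm in Htele. change (Nat.iter 0 f z) with z in Htele.
  assert (Hle : sumR (fun k => rho_pat s n - cross (Nat.iter k f z)) m <=
                sumR (fun k => Lext (Nat.iter (S k) f z) - Lext (Nat.iter k f z)) m).
  { apply sumR_le. intros k _. simpl.
    assert (Hr := iter_range k z Hz). assert (Hya := Hav k). assert (Hfya := Hav (S k)).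
    simpl in Hfya. set (y := Nat.iter k f z) in *.
    assert (y < a \/ a < y) as [Hy|Hy] by lra.
    - pose proof (Lext_step_left y ltac:(lra) Hfya). lra.
    - pose proof (Lext_step_right y ltac:(lra) Hfya). lra. }
  rewrite sumR_minus, sumR_const in Hle. lra.
Qed.

Theorem backward : r_pi_eq s n (rho_pat s n).
Proof.
  split.
  - intros y [x [m [Hx [Hm [Hmx [Hmin ->]]]]]].
    assert (Nx : x <> a) by (intros ->; apply (Hmin 1%nat); [lia|exact Hfa]).
    assert (Hav := periodic_avoids_a x m Nx ltac:(lia) Hmx).
    rewrite ornum_crossings by (auto; lia).
    assert (H := crossings_ge x m Hx Hmx Hav).
    assert (0 < INR m) by (apply lt_0_INR; lia).
    apply (Rmult_le_reg_r (INR m)); auto. unfold Rdiv.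
    rewrite Rmult_assoc, Rinv_l by lra. lra.
  - intros b Hb. apply Hb, rho_in_set.
Qed.

End Backward.

(* Suppose X = orb k1 >_a Y = orb k2 but the code
   drops from Y to X.  Then the u steps of P from Y to X make fewer than
   u rho crossings.  Pulling [X, a] back along these steps gives a subinterval
   [l, r] of [Y, a] whose orbit shadows that of Y.  If r = a, points near a
   alternate sides, so Y's orbit alternates and crosses u/2 >= u rho times;
   otherwise f^u has a fixed point z in [l, r] whose orbit crosses as often
   as Y's, giving a periodic orbit with over-rotation number below rho. *)

Lemma pullback (Y : R) k : forall c d,
  between (Nat.iter k f Y) a c -> between (Nat.iter k f Y) a d -> c <> d ->
  exists l r, between Y a l /\ between Y a r /\ Nat.iter k f l = c /\ Nat.iter k f r = d /\
    forall t, between l r t ->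
      (forall j, (j <= k)%nat -> between (Nat.iter j f Y) a (Nat.iter j f t)) /\
      between c d (Nat.iter k f t).
Proof.
  induction k as [|k IH]; intros c d Hc Hd Hcd.
  - exists c, d. simpl in *. do 4 (split; [auto|]).
    intros t Ht. split; [|auto]. intros j Hj. replace j with 0%nat by lia. simpl.
    apply (between_trans Y a c d t); auto.
  - assert (Hcont := Lip_cont _ _ n_pos plin_Lip).
    destruct (IVT_between f (Nat.iter k f Y) a c Hcont) as [p [Hp Ep]]; [rewrite Hfa; auto|].
    destruct (IVT_between f (Nat.iter k f Y) a d Hcont) as [q [Hq Eq]]; [rewrite Hfa; auto|].
    destruct (covering (INR n) f p q c d n_pos plin_Lip Ep Eq Hcd)
      as [l' [r' [Hl' [Hr' [El' [Er' Hcov]]]]]].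
    assert (Hl'k : between (Nat.iter k f Y) a l') by (apply (between_trans _ _ p q); auto).
    assert (Hr'k : between (Nat.iter k f Y) a r') by (apply (between_trans _ _ p q); auto).
    assert (Nlr : l' <> r') by (intros E; apply Hcd; rewrite <- El', <- Er', E; auto).
    destruct (IH l' r' Hl'k Hr'k Nlr) as [l [r [Hl [Hr [El [Er Hsh]]]]]].
    exists l, r. do 2 (split; [auto|]). simpl. rewrite El, Er. do 2 (split; [auto|]).
    intros t Htr. destruct (Hsh t Htr) as [Hsides Hend].
    assert (Hlast : between c d (f (Nat.iter k f t))) by (apply Hcov; auto).
    split; [|auto].
    intros j Hj. destruct (Nat.eq_dec j (S k)) as [->|Hne]; [|apply Hsides; lia].
    apply (between_trans _ _ c d); auto.
Qed.

Definition gap : R := Rmin (a - INR k0) (INR k0 + 1 - a).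

Lemma gap_pos : 0 < gap.
Proof. destruct a_in as [Hain _]. unfold gap. apply Rmin_case; lra. Qed.

Lemma near_iter j t : INR n ^ j * Rabs (t - a) < gap -> Nat.iter j f t - a = lam ^ j * (t - a).
Proof.
  destruct a_in as [Hain Hk0].
  assert (Hlam : Rabs lam <= INR n) by (apply slope_bound; auto).
  assert (Hn1 : 1 <= INR n) by (apply (le_INR 1); lia).
  induction j as [|j IH]; intros Hsmall; [simpl; ring|].
  assert (Hpow : INR n ^ j * Rabs (t - a) <= INR n ^ S j * Rabs (t - a)).
  { simpl. apply Rmult_le_compat_r; [apply Rabs_pos|].
    pose proof (pow_le (INR n) j ltac:(lra)). nra. }
  assert (Hj := IH ltac:(lra)).
  assert (Hclose : Rabs (Nat.iter j f t - a) < gap).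
  { rewrite Hj, Rabs_mult, <- RPow_abs.
    assert (Rabs lam ^ j <= INR n ^ j) by (apply pow_incr; split; [apply Rabs_pos|auto]).
    pose proof (Rabs_pos (t - a)). nra. }
  apply Rabs_def2 in Hclose.
  assert (gap <= a - INR k0) by apply Rmin_l. assert (gap <= INR k0 + 1 - a) by apply Rmin_r.
  simpl. rewrite near_a, Hj by lra. ring.
Qed.

Lemma close_point l u : l <> a ->
  exists t, between l a t /\ t <> a /\ INR n ^ u * Rabs (t - a) < gap.
Proof.
  intros Hl. pose proof gap_pos.
  assert (Hnu : 0 < INR n ^ u) by (apply pow_lt, n_pos).
  set (D := INR n ^ u * Rabs (l - a)).
  assert (HD : 0 < D) by (apply Rmult_lt_0_compat; [auto|apply Rabs_pos_lt; lra]).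
  set (th := gap / (gap + 2 * D)).
  assert (Hth : 0 < th < 1).
  { unfold th. split; [apply Rdiv_lt_0_compat; lra|].
    apply (Rmult_lt_reg_r (gap + 2 * D)); [lra|]. unfold Rdiv.
    rewrite Rmult_assoc, Rinv_l by lra. lra. }
  exists (a + th * (l - a)). split; [|split].
  - unfold between. destruct (Rle_dec l a); [left|right]; nra.
  - intros E. assert (Hz : th * (l - a) = 0) by lra. apply Rmult_integral in Hz. lra.
  - replace (a + th * (l - a) - a) with (th * (l - a)) by ring.
    rewrite Rabs_mult, (Rabs_right th) by lra.
    replace (INR n ^ u * (th * Rabs (l - a))) with (th * D) by (unfold D; ring).
    unfold th. apply (Rmult_lt_reg_r (gap + 2 * D)); [lra|].
    unfold Rdiv. field_simplify; [nra|lra].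
Qed.

Lemma between_same_side e w : between e a w -> w <> a -> (e - a) * (w - a) > 0.
Proof. intros [H|H] Hw; nra. Qed.

(* If the first u images of some t near a stay between the orbit of Y and a,
   the orbit of Y alternates sides of a for u steps, as the orbit of t does. *)
Lemma alternation (Y t : R) u : t <> a -> INR n ^ u * Rabs (t - a) < gap ->
  (forall j, (j <= u)%nat -> between (Nat.iter j f Y) a (Nat.iter j f t)) ->
  forall j, (j < u)%nat -> (Nat.iter j f Y - a) * (Nat.iter (S j) f Y - a) < 0.
Proof.
  intros Hta Hsmall Hsh.
  assert (Hn1 : 1 <= INR n) by (apply (le_INR 1); lia).
  assert (Hnear : forall j, (j <= u)%nat -> Nat.iter j f t - a = lam ^ j * (t - a)).
  { intros j Hj. apply near_iter.
    assert (INR n ^ j <= INR n ^ u) by (apply Rle_pow; auto).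
    pose proof (Rabs_pos (t - a)). nra. }
  assert (Hoff : forall j, (j <= u)%nat -> Nat.iter j f t - a <> 0).
  { intros j Hj. rewrite (Hnear j Hj). apply Rmult_integral_contrapositive_currified; [|lra].
    apply pow_nonzero. pose proof lam_le. lra. }
  assert (Hoff' : forall j, (j <= u)%nat -> Nat.iter j f t <> a).
  { intros j Hj E. apply (Hoff j Hj). rewrite E. ring. }
  intros j Hj.
  assert (S1 := between_same_side _ _ (Hsh j ltac:(lia)) (Hoff' j ltac:(lia))).
  assert (S2 := between_same_side _ _ (Hsh (S j) Hj) (Hoff' (S j) Hj)).
  assert (Hflip : (Nat.iter j f t - a) * (Nat.iter (S j) f t - a) < 0).
  { assert (HV : Nat.iter (S j) f t - a = lam * (Nat.iter j f t - a)).
    { rewrite (Hnear (S j) Hj), (Hnear j ltac:(lia)). simpl. ring. }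
    assert (Hsq := Rsqr_pos_lt _ (Hoff j ltac:(lia))). unfold Rsqr in Hsq.
    rewrite HV. pose proof lam_le. nra. }
  set (A := Nat.iter j f Y - a) in *. set (B := Nat.iter (S j) f Y - a) in *.
  set (U := Nat.iter j f t - a) in *. set (V := Nat.iter (S j) f t - a) in *.
  assert (A * B * (U * V) > 0) by (replace (A * B * (U * V)) with ((A * U) * (B * V)) by ring; nra).
  nra.
Qed.

Lemma code_segment k u :
  code s n a (k + u) - code s n a k =
  INR u * rho_pat s n - sumR (fun j => cross (Nat.iter j f (INR (orb k)))) u.
Proof.
  rewrite !code_crossings. unfold crossings. rewrite sumR_split, plus_INR.
  rewrite (sumR_ext (fun j => phi s a (orb (k + j))) (fun j => cross (Nat.iter j f (INR (orb k))))).
  - ring.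
  - intros j _. rewrite iter_nat by apply orb_lt. fold (orb j).
    rewrite <- orb_add, Nat.add_comm. apply phi_cross, orb_lt.
Qed.

Lemma steps_between k1 k2 : (k1 < n)%nat -> (k2 < n)%nat -> k1 <> k2 ->
  exists u, (0 < u)%nat /\ orb (k2 + u) = orb k1 /\ code s n a (k2 + u) = code s n a k1.
Proof.
  intros Hk1 Hk2 Hne. destruct (Nat.lt_ge_cases k2 k1) as [Hlt|Hge].
  - exists (k1 - k2)%nat. replace (k2 + (k1 - k2))%nat with k1 by lia. split; [lia|auto].
  - exists (n + k1 - k2)%nat. replace (k2 + (n + k1 - k2))%nat with (n + k1)%nat by lia.
    split; [lia|split; [apply orb_plus_n|apply code_plus_n]].
Qed.

Lemma shadow_crossings Y z u :
  (forall j, (j <= u)%nat -> (Nat.iter j f Y - a) * (Nat.iter j f z - a) > 0) ->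
  sumR (fun j => cross (Nat.iter j f z)) u = sumR (fun j => cross (Nat.iter j f Y)) u.
Proof.
  intros Hside. apply sumR_ext. intros j Hj.
  pose proof (Hside j ltac:(lia)) as H1. pose proof (Hside (S j) ltac:(lia)) as H2.
  simpl in H2. unfold cross, right, indic.
  destruct (Rlt_dec a (Nat.iter j f z)), (Rlt_dec a (Nat.iter j f Y)),
    (Rlt_dec (f (Nat.iter j f z)) a), (Rlt_dec (f (Nat.iter j f Y)) a); nra.
Qed.

(* An orbit segment that alternates sides of a, and ends on the side where it
   started, crosses right-to-left exactly half of the time, i.e. >= u rho times. *)
Lemma alternating_crossings Y u :
  (forall j, (j < u)%nat -> (Nat.iter j f Y - a) * (Nat.iter (S j) f Y - a) < 0) ->
  (Nat.iter u f Y - a) * (Y - a) > 0 ->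
  INR u * rho_pat s n <= sumR (fun j => cross (Nat.iter j f Y)) u.
Proof.
  intros Halt Hend. set (R j := right (Nat.iter j f Y)).
  assert (Hcross : forall j, (j < u)%nat -> cross (Nat.iter j f Y) = R j).
  { intros j Hj. specialize (Halt j Hj). simpl in Halt. unfold cross, R, right, indic.
    destruct (Rlt_dec a (Nat.iter j f Y)), (Rlt_dec (f (Nat.iter j f Y)) a); nra. }
  assert (Hpair : forall j, (j < u)%nat -> R j + R (S j) = 1).
  { intros j Hj. specialize (Halt j Hj). unfold R, right, indic.
    destruct (Rlt_dec a (Nat.iter j f Y)), (Rlt_dec a (Nat.iter (S j) f Y)); nra. }
  assert (HRu : R u = R O).
  { unfold R, right, indic. simpl. destruct (Rlt_dec a (Nat.iter u f Y)), (Rlt_dec a Y); nra. }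
  assert (Hhalf : 2 * sumR R u = INR u).
  { assert (Hshift := sumR_shift R u). rewrite HRu in Hshift.
    assert (Hones : sumR (fun j => R j + R (S j)) u = INR u).
    { rewrite (sumR_ext _ (fun _ => 1)) by auto. rewrite sumR_const. ring. }
    rewrite sumR_plus, Hshift in Hones. lra. }
  rewrite (sumR_ext _ R) by auto. pose proof rho_le_half. pose proof (pos_INR u). nra.
Qed.

Lemma periodic_below z u : 0 <= z <= INR (n - 1) -> z <> a -> (0 < u)%nat ->
  Nat.iter u f z = z -> sumR (fun j => cross (Nat.iter j f z)) u < INR u * rho_pat s n ->
  exists r, ornum_set s n r /\ r < rho_pat s n.
Proof.
  intros Hz Hza Hu Hper Hfew.
  destruct (least_positive (fun d => Nat.iter d f z = z) u Hper Hu) as [d [Hd [Pd Hmin]]].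
  assert (Hd2 : (2 <= d)%nat).
  { destruct (Nat.eq_dec d 1) as [->|]; [|lia]. exfalso. apply Hza, fix_unique; auto. }
  assert (Hiter : forall q j, Nat.iter (q * d + j) f z = Nat.iter j f z).
  { induction q as [|q IH]; intros j; [reflexivity|].
    replace (S q * d + j)%nat with ((q * d + j) + d)%nat by lia.
    rewrite Nat.iter_add, Pd. auto. }
  assert (Hdiv : (u mod d = 0)%nat).
  { apply NNPP. intros Hne. apply (Hmin (u mod d)); [split; [lia|apply Nat.mod_upper_bound; lia]|].
    rewrite <- (Hiter (u / d)%nat (u mod d)), Nat.mul_comm, <- Nat.div_mod_eq. auto. }
  assert (Hu_eq : u = ((u / d) * d)%nat) by (rewrite (Nat.div_mod_eq u d) at 1; lia).
  assert (Hsum : sumR (fun j => cross (Nat.iter j f z)) u =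
                 INR (u / d) * sumR (fun j => cross (Nat.iter j f z)) d).
  { rewrite Hu_eq at 1. apply sumR_periodic. intros j.
    rewrite <- (Hiter 1%nat j). f_equal. f_equal. lia. }
  assert (Hq : 0 < INR (u / d)) by (apply lt_0_INR; destruct (u / d)%nat; lia).
  assert (Hdp : 0 < INR d) by (apply lt_0_INR; lia).
  exists (ornum f z d). split.
  - exists z, d. auto 6.
  - rewrite (ornum_crossings z d Hz ltac:(lia) Pd (periodic_avoids_a z d Hza ltac:(lia) Pd)).
    apply (Rmult_lt_reg_r (INR d)); [auto|]. unfold Rdiv.
    rewrite Rmult_assoc, Rinv_l by lra.
    assert (Hu_INR : INR u = INR (u / d) * INR d) by (rewrite Hu_eq at 1; apply mult_INR).
    rewrite Hsum, Hu_INR in Hfew. nra.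
Qed.

(* If the pulled-back interval [l, r] avoids a, f^u has a fixed point in it:
   f^u l = X lies beyond l while f^u r = a lies beyond r in the other direction. *)
Lemma fixed_point_in_pullback X Y l r u : gt_a a X Y ->
  between Y a l -> between Y a r -> r <> a ->
  Nat.iter u f l = X -> Nat.iter u f r = a ->
  exists z, between l r z /\ Nat.iter u f z = z /\ z <> a.
Proof.
  intros Hgt Hl Hr Hra El Er.
  assert (Hla : l <> a) by (intros ->; rewrite iter_fix_a in El; unfold gt_a in Hgt; lra).
  set (g := fun t => Nat.iter u f t - t).
  assert (Hg : continuity g).
  { apply continuity_minus; [apply iter_cont|apply derivable_continuous, derivable_id]. }
  destruct (IVT_between g l r 0 Hg) as [z [Hz Ez]].
  { unfold g. rewrite El, Er. unfold between, gt_a in *. lra. }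
  exists z. unfold g in Ez. split; [auto|split; [lra|]].
  intros ->. unfold between, gt_a in *. lra.
Qed.

Theorem forward : r_pi_eq s n (rho_pat s n) -> code_nondecreasing s n a.
Proof.
  intros [Hlow _] k1 k2 Hk1 Hk2 Hgt. apply Rnot_lt_le. intros Hdrop.
  fold (orb k1) (orb k2) in Hgt.
  set (X := INR (orb k1)) in *. set (Y := INR (orb k2)) in *.
  assert (Hk12 : k1 <> k2) by (intros ->; unfold gt_a in Hgt; lra).
  destruct (steps_between k1 k2 Hk1 Hk2 Hk12) as [u [Hu [Horb Hcode]]].
  assert (HYj : forall j, Nat.iter j f Y = INR (orb (k2 + j))).
  { intros j. unfold Y. rewrite iter_nat, <- orb_add, Nat.add_comm by apply orb_lt. auto. }
  assert (HYu : Nat.iter u f Y = X) by (rewrite HYj, Horb; auto).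
  assert (HYa : forall j, Nat.iter j f Y <> a) by (intros j; rewrite HYj; apply a_not_nat, orb_lt).
  assert (Hfew : sumR (fun j => cross (Nat.iter j f Y)) u < INR u * rho_pat s n)
    by (pose proof (code_segment k2 u); fold Y in H; lra).
  assert (HXa : X <> a) by apply a_not_nat, orb_lt.
  destruct (pullback Y u X a) as [l [r [Hl [Hr [El [Er Hsh]]]]]];
    [rewrite HYu; unfold between; lra..|auto|].
  destruct (Req_dec r a) as [->|Hra].
  - (* l..a shadows Y, and points near a alternate: Y alternates *)
    assert (Hla : l <> a) by (intros ->; rewrite iter_fix_a in El; unfold gt_a in Hgt; lra).
    destruct (close_point l u Hla) as [t [Ht [Hta Hsmall]]].
    assert (Halt := alternation Y t u Hta Hsmall (proj1 (Hsh t ltac:(unfold between in *; lra)))).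
    apply (Rlt_not_le _ _ Hfew), alternating_crossings; auto.
    rewrite HYu. unfold gt_a in Hgt. nra.
  - (* a periodic orbit shadowing Y crosses too rarely *)
    destruct (fixed_point_in_pullback X Y l r u Hgt Hl Hr Hra El Er) as [z [Hz [Hzz Hza]]].
    assert (Hz01 : 0 <= z <= INR (n - 1)).
    { assert (HY01 : 0 <= Y <= INR (n - 1)).
      { unfold Y. split; [apply pos_INR|apply le_INR]. pose proof (orb_lt k2). lia. }
      unfold between in *. lra. }
    assert (Hside : forall j, (j <= u)%nat -> (Nat.iter j f Y - a) * (Nat.iter j f z - a) > 0).
    { intros j Hj. apply between_same_side; [apply (proj1 (Hsh z Hz)); auto|].
      apply (periodic_avoids_a z u Hza Hu Hzz). }
    rewrite <- (shadow_crossings Y z u Hside) in Hfew.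
    destruct (periodic_below z u Hz01 Hza Hu Hzz Hfew) as [rr [Hin Hlt]].
    specialize (Hlow rr Hin). lra.
Qed.

End Convergent.

End Pattern.

Theorem corollary3p4 (s : nat -> nat) (n : nat) (a : R) :
  (2 <= n)%nat ->
  is_cyclic_perm s n ->
  convergent s n ->
  0 <= a <= INR (n - 1) -> plin s n a = a ->
  (r_pi_eq s n (rho_pat s n) <-> code_nondecreasing s n a).
Proof.
  intros Hn Hcyc Hconv Ha Hfa. split.
  - apply (forward s n Hn Hcyc a Hconv Ha Hfa).
  - apply (backward s n Hn Hcyc a Hconv Ha Hfa).
Qed.
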